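(* Let $\mathscr{A}$ be a nonempty closed set of games with $\mathscr{A}\neq\{0\}$ whose misère quotient $(\mathcal{Q},\mathcal{P})=\mathcal{Q}(\mathscr{A})$ is finite, and let $\mathcal{K}$ be the kernel of $\mathcal{Q}$. Then $\mathcal{K}\cap\mathcal{P}\neq\emptyset$.
   Context: Games are finite, loopfree impartial games identified with the finite set of their options ($0=\{\}$); disjunctive sum $G+H=\{G'+H\}\cup\{G+H'\}$. Misère outcome: $o^-(G)=\mathscr{P}$ iff $G\neq0$ and every option has outcome $\mathscr{N}$; otherwise $\mathscr{N}$. A set of games is closed if it contains all options of its members and is closed under $+$. For closed $\mathscr{A}$: $G\equiv_\mathscr{A}H$ iff $o^-(G+X)=o^-(H+X)$ for all $X\in\mathscr{A}$; $\mathcal{Q}(\mathscr{A})=(\mathcal{Q},\mathcal{P})$ is the commutative monoid of $\equiv_\mathscr{A}$-classes ($[G][H]=[G+H]$) with $\mathcal{P}$ the set of classes of misère $\mathscr{P}$-positions. For a finite commutative monoid $\mathcal{Q}$, let $z$ be the product of all idempotents ($x^2=x$) of $\mathcal{Q}$; the kernel is $\mathcal{K}=\{x\in\mathcal{Q}: x\mid z\text{ and } z\mid x\}$, where $x\mid y$ means $xw=y$ for some $w\in\mathcal{Q}$. *)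

(* Finite loopfree impartial games as rose trees of options. *)
From Stdlib Require Import List.
Import ListNotations.

Inductive game : Type := Node : list game -> game.

Definition options (G : game) : list game := match G with Node gs => gs end.

Definition zero : game := Node [].

Fixpoint gadd (G : game) : game -> game :=
  fix addH (H : game) : game :=
    match G, H with
    | Node gs, Node hs => Node (map (fun g => gadd g H) gs ++ map addH hs)
    end.

Fixpoint misereP (G : game) : bool :=
  match G with
  | Node gs =>
      match gs with
      | [] => false
      | _ :: _ => forallb (fun g => negb (misereP g)) gs
      end
  end.

Definition closed (A : game -> Prop) : Prop :=
  (forall G, A G -> forall G', In G' (options G) -> A G') /\
  (forall G H, A G -> A H -> A (gadd G H)).

Definition equivA (A : game -> Prop) (G H : game) : Prop :=
  forall X, A X -> misereP (gadd G X) = misereP (gadd H X).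

Definition finite_quotient (A : game -> Prop) : Prop :=
  exists s : list game, (forall G, In G s -> A G) /\
    (forall G, A G -> exists H, In H s /\ equivA A G H).

Definition divQ (A : game -> Prop) (X Y : game) : Prop :=
  exists W, A W /\ equivA A (gadd X W) Y.

Definition idemQ (A : game -> Prop) (E : game) : Prop :=
  A E /\ equivA A (gadd E E) E.

Definition gsum (L : list game) : game := fold_right gadd zero L.

(* Z represents z, the product of all idempotents of Q(A): Z is the sum of
   a list containing exactly one representative of each idempotent class. *)
Definition prod_idem (A : game -> Prop) (Z : game) : Prop :=
  exists L : list game,
    (forall E, In E L -> idemQ A E) /\
    (forall E, idemQ A E -> exists E', In E' L /\ equivA A E E') /\
    (forall i j, i < j < length L -> ~ equivA A (nth i L zero) (nth j L zero)) /\
    Z = gsum L.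

Definition in_kernel (A : game -> Prop) (G : game) : Prop :=
  A G /\ forall Z, prod_idem A Z -> divQ A G Z /\ divQ A Z G.

(* Write the quotient additively and let z be the sum of all idempotents.  For
   any y some multiple N y is idempotent, so (z + y) + (N-1) y = z + N y = z:
   hence z + y lies in the kernel, and the kernel is an ideal.  Take a nonzero
   kernel element K = z + G with G nonzero.  Then K + K is a nonzero kernel
   element; if it is not a P-position it has a P-option, which is K + K' up to
   commutativity, again in the kernel. *)
From Stdlib Require Import List Lia Classical.
Import ListNotations.

(** * Games up to isomorphism *)

Fixpoint game_ind_in (P : game -> Prop)
  (H : forall gs, (forall g, In g gs -> P g) -> P (Node gs)) (G : game) : P G :=
  match G with
  | Node gs => H gs ((fix F (l : list game) : forall g, In g l -> P g :=
      match l with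
      | [] => fun g (i : In g []) => False_ind _ i
      | x :: r => fun g i => match i with
                  | or_introl e => eq_ind x P (game_ind_in P H x) g e
                  | or_intror i' => F r g i'
                  end
      end) gs)
  end.

Lemma in_options_gadd G H o : In o (options (gadd G H)) <->
  (exists g, In g (options G) /\ o = gadd g H) \/
  (exists h, In h (options H) /\ o = gadd G h).
Proof.
  destruct G as [gs], H as [hs]; cbn [gadd options].
  rewrite in_app_iff, !in_map_iff.
  split; intros [[x [E I]]|[x [E I]]]; subst; eauto.
Qed.

Lemma gadd_neq_zero G H : H <> zero -> gadd G H <> zero.
Proof.
  destruct H as [[|h hs]]; [contradiction|intros _ E].
  assert (Ho : In (gadd G h) (options (gadd G (Node (h :: hs))))).
  { apply in_options_gadd; right; exists h; simpl; auto. }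
  rewrite E in Ho; destruct Ho.
Qed.

(* The sum is commutative and associative only up to this relation, which
   matches options recursively, up to order and repetition. *)
Inductive sim : game -> game -> Prop :=
  simN : forall gs hs,
    (forall g, In g gs -> exists h, In h hs /\ sim g h) ->
    (forall h, In h hs -> exists g, In g gs /\ sim g h) -> sim (Node gs) (Node hs).

Lemma simP G H : sim G H <->
  (forall g, In g (options G) -> exists h, In h (options H) /\ sim g h) /\
  (forall h, In h (options H) -> exists g, In g (options G) /\ sim g h).
Proof.
  destruct G as [gs], H as [hs]; split.
  - intro S; inversion S; subst; auto.
  - intros [? ?]; constructor; auto.
Qed.

Lemma sim_refl G : sim G G.
Proof. induction G using game_ind_in. constructor; eauto. Qed.

Lemma misereP_iff G : misereP G = true <->
  options G <> [] /\ forall g, In g (options G) -> misereP g = false.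
Proof.
  destruct G as [[|x r]]; cbn [options].
  - split; [discriminate | intros [[] _]; reflexivity].
  - change (misereP (Node (x :: r))) with (forallb (fun g => negb (misereP g)) (x :: r)).
    rewrite forallb_forall. split.
    + intros Hf; split; [discriminate|]. intros g Hg.
      specialize (Hf g Hg); destruct (misereP g); auto.
    + intros [_ Hf] g Hg. now rewrite (Hf g Hg).
Qed.

Lemma misereP_option G : G <> zero -> misereP G = false ->
  exists g, In g (options G) /\ misereP g = true.
Proof.
  intros Hz HN. apply NNPP; intro Hno.
  assert (HP : misereP G = true); [|congruence].
  apply misereP_iff; split.
  - destruct G as [gs]; intro E; apply Hz; cbn in E; now subst.
  - intros g Hg. destruct (misereP g) eqn:Eg; auto. exfalso; eauto.
Qed.

Lemma misereP_sim G H : sim G H -> misereP G = misereP H.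
Proof.
  revert H; induction G as [gs IH] using game_ind_in; intros H S.
  apply simP in S; destruct S as [S1 S2]; cbn [options] in S1, S2.
  apply Bool.eq_iff_eq_true. rewrite !misereP_iff; cbn [options]. split.
  - intros [Hne Hall]; split.
    + destruct gs as [|g r]; [congruence|].
      destruct (S1 g (or_introl eq_refl)) as [h [Hh _]].
      intro E; rewrite E in Hh; destruct Hh.
    + intros h Hh. destruct (S2 h Hh) as [g [Hg Sg]]. rewrite <- (IH g Hg h Sg). auto.
  - intros [Hne Hall]; split.
    + intro E; subst gs. destruct (options H) as [|h r]; [congruence|].
      destruct (S2 h (or_introl eq_refl)) as [g [[] _]].
    + intros g Hg. destruct (S1 g Hg) as [h [Hh Sh]]. rewrite (IH g Hg h Sh). auto.
Qed.

Lemma sim_gadd G G' H H' : sim G G' -> sim H H' -> sim (gadd G H) (gadd G' H').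
Proof.
  revert G' H H'; induction G as [gs IHg] using game_ind_in; intros G' H.
  revert G'; induction H as [hs IHh] using game_ind_in; intros G' H' SG SH.
  pose proof SG as SG0; pose proof SH as SH0.
  apply simP in SG; destruct SG as [A1 A2].
  apply simP in SH; destruct SH as [B1 B2]; cbn [options] in A1, A2, B1, B2.
  apply simP; split; intros o Ho;
    apply in_options_gadd in Ho; destruct Ho as [[x [Hx ->]]|[x [Hx ->]]].
  - destruct (A1 x Hx) as [x' [Hx' Sx]].
    exists (gadd x' H'); split; [apply in_options_gadd; eauto | apply IHg; auto].
  - destruct (B1 x Hx) as [x' [Hx' Sx]].
    exists (gadd G' x'); split; [apply in_options_gadd; eauto | apply IHh; auto].
  - destruct (A2 x Hx) as [x' [Hx' Sx]].
    exists (gadd x' (Node hs)); split; [apply in_options_gadd; eauto | apply IHg; auto].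
  - destruct (B2 x Hx) as [x' [Hx' Sx]].
    exists (gadd (Node gs) x'); split; [apply in_options_gadd; eauto | apply IHh; auto].
Qed.

Lemma sim_gaddC G H : sim (gadd G H) (gadd H G).
Proof.
  revert H; induction G as [gs IHg] using game_ind_in; intros H.
  induction H as [hs IHh] using game_ind_in.
  apply simP; split; intros o Ho;
    apply in_options_gadd in Ho; destruct Ho as [[x [Hx ->]]|[x [Hx ->]]].
  - exists (gadd (Node hs) x); split; [apply in_options_gadd; eauto | apply IHg; auto].
  - exists (gadd x (Node gs)); split; [apply in_options_gadd; eauto | apply IHh; auto].
  - exists (gadd (Node gs) x); split; [apply in_options_gadd; eauto | apply IHh; auto].
  - exists (gadd x (Node hs)); split; [apply in_options_gadd; eauto | apply IHg; auto].
Qed.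

Lemma sim_gaddA G H X : sim (gadd (gadd G H) X) (gadd G (gadd H X)).
Proof.
  revert H X; induction G as [gs IHg] using game_ind_in; intros H.
  induction H as [hs IHh] using game_ind_in; intros X.
  induction X as [xs IHx] using game_ind_in.
  apply simP; split; intros o Ho; apply in_options_gadd in Ho.
  - destruct Ho as [[y [Hy ->]]|[x [Hx ->]]].
    + apply in_options_gadd in Hy; destruct Hy as [[g [Hg ->]]|[h [Hh ->]]].
      * exists (gadd g (gadd (Node hs) (Node xs))).
        split; [apply in_options_gadd; eauto | apply IHg; auto].
      * exists (gadd (Node gs) (gadd h (Node xs))); split; [|apply IHh; auto].
        apply in_options_gadd; right; eexists; split; [|reflexivity].
        apply in_options_gadd; eauto.
    + exists (gadd (Node gs) (gadd (Node hs) x)); split; [|apply IHx; auto].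
      apply in_options_gadd; right; eexists; split; [|reflexivity].
      apply in_options_gadd; eauto.
  - destruct Ho as [[g [Hg ->]]|[y [Hy ->]]].
    + exists (gadd (gadd g (Node hs)) (Node xs)); split; [|apply IHg; auto].
      apply in_options_gadd; left; eexists; split; [|reflexivity].
      apply in_options_gadd; eauto.
    + apply in_options_gadd in Hy; destruct Hy as [[h [Hh ->]]|[x [Hx ->]]].
      * exists (gadd (gadd (Node gs) h) (Node xs)); split; [|apply IHh; auto].
        apply in_options_gadd; left; eexists; split; [|reflexivity].
        apply in_options_gadd; eauto.
      * exists (gadd (gadd (Node gs) (Node hs)) x).
        split; [apply in_options_gadd; eauto | apply IHx; auto].
Qed.

Lemma sim_gadd0l G : sim (gadd zero G) G.
Proof.
  induction G as [hs IH] using game_ind_in; apply simP; split.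
  - intros o Ho; apply in_options_gadd in Ho.
    destruct Ho as [[g [[] _]]|[h [Hh ->]]]; eauto.
  - intros h Hh. exists (gadd zero h); split; auto. apply in_options_gadd; eauto.
Qed.

Section Classes.
Variables (T : Type) (R : T -> T -> Prop).
Hypothesis R_refl : forall x, R x x.

Lemma exists_transversal (P : T -> Prop) (d : T) (l : list T) :
  exists t, (forall x, In x t -> In x l /\ P x) /\
    (forall x, In x l -> P x -> exists y, In y t /\ R x y) /\
    (forall i j, i < j < length t -> ~ R (nth i t d) (nth j t d)).
Proof.
  induction l as [|a l [t [Hsub [Hcov Hsep]]]].
  - exists []; split; [|split]; [intros ? []|intros ? []|intros i j Hij; cbn in Hij; lia].
  - destruct (classic (P a /\ forall y, In y t -> ~ R a y)) as [[Pa Hnew]|Hold].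
    + exists (a :: t); split; [|split].
      * intros x [->|Hx]; [simpl; auto|]. destruct (Hsub x Hx); simpl; auto.
      * intros x [->|Hx] Px; [exists x; simpl; auto|].
        destruct (Hcov x Hx Px) as [y [Hy Ry]]; exists y; simpl; auto.
      * intros [|i] [|j] Hij; cbn in Hij |- *; try lia.
        -- apply Hnew, nth_In; lia.
        -- apply Hsep; lia.
    + exists t; split; [|split].
      * intros x Hx; destruct (Hsub x Hx); simpl; auto.
      * intros x [->|Hx] Px; [|apply Hcov; auto].
        apply NNPP; intro Hno; apply Hold; split; [auto|].
        intros y Hy Ry; eauto.
      * exact Hsep.
Qed.

Hypothesis R_sym : forall x y, R x y -> R y x.
Hypothesis R_trans : forall x y z, R x y -> R y z -> R x z.

Lemma pigeonhole_classes (s : list T) (f : nat -> T) :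
  (forall i, exists h, In h s /\ R (f i) h) -> exists i j, i < j /\ R (f i) (f j).
Proof.
  revert f; induction s as [|a s IH]; intros f Hf.
  - destruct (Hf 0) as [h [[] _]].
  - destruct (classic (exists i, R (f i) a)) as [[i0 Ri0]|Hnone].
    + destruct (classic (exists j, i0 < j /\ R (f j) a)) as [[j [Hj Rj]]|Hlater].
      { exists i0, j; eauto. }
      destruct (IH (fun k => f (i0 + S k))) as [i [j [Hij Rij]]].
      * intros k. destruct (Hf (i0 + S k)) as [h [[<-|Hh] Rh]]; eauto.
        exfalso; apply Hlater; exists (i0 + S k); split; [lia|auto].
      * exists (i0 + S i), (i0 + S j); split; [lia|auto].
    + apply IH. intros k. destruct (Hf k) as [h [[<-|Hh] Rh]]; eauto.
      exfalso; eauto.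
Qed.

End Classes.

(** * The misère quotient of a closed set *)

Section Quotient.
Variable A : game -> Prop.
Hypothesis closedA : closed A.

Lemma closed_option G g : A G -> In g (options G) -> A g.
Proof. destruct closedA as [Hopt _]; eauto. Qed.

Lemma closed_gadd G H : A G -> A H -> A (gadd G H).
Proof. destruct closedA as [_ Hadd]; auto. Qed.

Lemma closed_zero G : A G -> A zero.
Proof.
  induction G as [[|g gs] IH] using game_ind_in; intros HG; [exact HG|].
  apply (IH g (or_introl eq_refl)), (closed_option _ _ HG); simpl; auto.
Qed.

Lemma equivA_refl G : equivA A G G.
Proof. intros X _; reflexivity. Qed.

Lemma equivA_sym G H : equivA A G H -> equivA A H G.
Proof. intros h X HX; symmetry; auto. Qed.

Lemma equivA_trans G H K : equivA A G H -> equivA A H K -> equivA A G K.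
Proof. intros h1 h2 X HX; rewrite (h1 X HX); auto. Qed.

Lemma sim_equivA G H : sim G H -> equivA A G H.
Proof. intros S X _; apply misereP_sim, sim_gadd; auto using sim_refl. Qed.

Lemma equivA_addC G H : equivA A (gadd G H) (gadd H G).
Proof. apply sim_equivA, sim_gaddC. Qed.

Lemma equivA_addA G H X : equivA A (gadd (gadd G H) X) (gadd G (gadd H X)).
Proof. apply sim_equivA, sim_gaddA. Qed.

Lemma equivA_add0l G : equivA A (gadd zero G) G.
Proof. apply sim_equivA, sim_gadd0l. Qed.

Lemma equivA_addr G H K : equivA A G H -> A K -> equivA A (gadd G K) (gadd H K).
Proof.
  intros e HK X HX.
  rewrite (misereP_sim _ _ (sim_gaddA G K X)), (misereP_sim _ _ (sim_gaddA H K X)).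
  apply e, closed_gadd; auto.
Qed.

Lemma equivA_addl G H K : equivA A G H -> A K -> equivA A (gadd K G) (gadd K H).
Proof.
  intros e HK. eapply equivA_trans; [apply equivA_addC|].
  eapply equivA_trans; [apply equivA_addr; eauto|apply equivA_addC].
Qed.

Lemma divQ_refl G : A zero -> divQ A G G.
Proof.
  intros Hz; exists zero; split; [exact Hz|].
  eapply equivA_trans; [apply equivA_addC|apply equivA_add0l].
Qed.

Lemma divQ_equivA G H : A zero -> equivA A G H -> divQ A G H.
Proof.
  intros Hz e. destruct (divQ_refl G Hz) as [W [HW eW]].
  exists W; split; [exact HW|]. eapply equivA_trans; eauto.
Qed.

Lemma divQ_trans G H K : divQ A G H -> divQ A H K -> divQ A G K.
Proof.
  intros [W1 [HW1 e1]] [W2 [HW2 e2]].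
  exists (gadd W1 W2); split; [apply closed_gadd; auto|].
  eapply equivA_trans; [apply equivA_sym, equivA_addA|].
  eapply equivA_trans; [apply equivA_addr; eauto|exact e2].
Qed.

Lemma idemQ_equivA E F : A F -> idemQ A E -> equivA A E F -> idemQ A F.
Proof.
  intros HF [HE eE] e. split; [exact HF|].
  eapply equivA_trans; [apply equivA_addr; [apply equivA_sym, e|exact HF]|].
  eapply equivA_trans; [apply equivA_addl; [apply equivA_sym, e|exact HE]|].
  eapply equivA_trans; eauto.
Qed.

(** * Powers and idempotents *)

Fixpoint gpow (Y : game) (n : nat) : game :=
  match n with 0 => zero | S n => gadd Y (gpow Y n) end.

Lemma closed_gpow Y n : A zero -> A Y -> A (gpow Y n).
Proof. intros Hz HY; induction n; simpl; [exact Hz|apply closed_gadd; auto]. Qed.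

Lemma gpowD Y a b : A Y -> equivA A (gpow Y (a + b)) (gadd (gpow Y a) (gpow Y b)).
Proof.
  intros HY; induction a; simpl.
  - apply equivA_sym, equivA_add0l.
  - eapply equivA_trans; [apply equivA_addl; eauto|]. apply equivA_sym, equivA_addA.
Qed.

Lemma gpow_periodic Y m p : A zero -> A Y ->
  equivA A (gpow Y m) (gpow Y (m + p)) ->
  forall t k, equivA A (gpow Y (m + t)) (gpow Y (m + t + k * p)).
Proof.
  intros Hz HY e.
  assert (step : forall t, equivA A (gpow Y (m + t)) (gpow Y (m + t + p))).
  { intros t. eapply equivA_trans; [apply gpowD; auto|].
    eapply equivA_trans; [apply equivA_addr; [exact e|apply closed_gpow; auto]|].
    replace (m + t + p) with (m + p + t) by lia. apply equivA_sym, gpowD; auto. }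
  intros t k; induction k as [|k IHk].
  - rewrite <- plus_n_O. apply equivA_refl.
  - eapply equivA_trans; [exact IHk|].
    replace (m + t + S k * p) with (m + (t + k * p) + p) by lia.
    replace (m + t + k * p) with (m + (t + k * p)) by lia. apply step.
Qed.

(* Once the powers are periodic from m on with period p, the exponent m * p
   is a multiple of p beyond m. *)
Lemma gpow_idem_of_periodic Y m p : A zero -> A Y -> 1 <= m -> 1 <= p ->
  equivA A (gpow Y m) (gpow Y (m + p)) -> idemQ A (gpow Y (m * p)).
Proof.
  intros Hz HY Hm Hp e. split; [apply closed_gpow; auto|].
  eapply equivA_trans; [apply equivA_sym, gpowD; auto|].
  pose proof (gpow_periodic Y m p Hz HY e (m * p - m) m) as q.
  replace (m + (m * p - m)) with (m * p) in q by nia.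
  apply equivA_sym, q.
Qed.

Lemma gpow_idem Y : A zero -> finite_quotient A -> A Y ->
  exists N, 1 <= N /\ idemQ A (gpow Y N).
Proof.
  intros Hz [s [_ Hs]] HY.
  destruct (pigeonhole_classes _ (equivA A) equivA_sym equivA_trans s
              (fun i => gpow Y (S i))) as [i [j [Hij e]]].
  { intros i. destruct (Hs (gpow Y (S i))) as [h [Hh eh]]; [apply closed_gpow; auto|eauto]. }
  exists (S i * (j - i)); split; [nia|].
  apply gpow_idem_of_periodic; auto; try lia.
  now replace (S i + (j - i)) with (S j) by lia.
Qed.

(** * The product of the idempotents and the kernel *)

Lemma closed_gsum L : A zero -> (forall E, In E L -> A E) -> A (gsum L).
Proof.
  intros Hz; induction L as [|x L IH]; simpl; intros HL; auto.
  apply closed_gadd; auto.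
Qed.

Lemma prod_idem_closed Z : A zero -> prod_idem A Z -> A Z.
Proof.
  intros Hz [L [HL [_ [_ ->]]]]. apply closed_gsum; auto. intros; apply HL; auto.
Qed.

Lemma gsum_absorb_mem L E : A zero -> (forall x, In x L -> idemQ A x) -> In E L ->
  equivA A (gadd E (gsum L)) (gsum L).
Proof.
  intros Hz; induction L as [|x L IH]; simpl; intros HL Hin; [destruct Hin|].
  assert (AL : A (gsum L)) by (apply closed_gsum; auto; intros; apply HL; auto).
  assert (Ax : A x) by (apply HL; auto).
  eapply equivA_trans; [apply equivA_sym, equivA_addA|].
  destruct Hin as [<-|Hin].
  - apply equivA_addr; auto. apply HL; auto.
  - eapply equivA_trans; [apply equivA_addr; [apply equivA_addC|auto]|].
    eapply equivA_trans; [apply equivA_addA|]. apply equivA_addl; auto.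
Qed.

Lemma prod_idem_absorb Z E : A zero -> prod_idem A Z -> idemQ A E ->
  equivA A (gadd E Z) Z.
Proof.
  intros Hz HZ HE. pose proof (prod_idem_closed Z Hz HZ) as AZ.
  destruct HZ as [L [HL [Hcov [_ ->]]]]. destruct (Hcov E HE) as [E' [HE' e]].
  eapply equivA_trans; [apply equivA_addr; eauto|].
  apply gsum_absorb_mem; auto.
Qed.

Lemma gsum_idem_absorb Z L : A zero -> prod_idem A Z ->
  (forall x, In x L -> idemQ A x) -> equivA A (gadd (gsum L) Z) Z.
Proof.
  intros Hz HZ; induction L as [|x L IH]; simpl; intros HL; [apply equivA_add0l|].
  eapply equivA_trans; [apply equivA_addA|].
  eapply equivA_trans; [apply equivA_addl; [apply IH; auto|apply HL; auto]|].
  apply prod_idem_absorb; auto.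
Qed.

Lemma prod_idem_unique Z1 Z2 : A zero -> prod_idem A Z1 -> prod_idem A Z2 ->
  equivA A Z1 Z2.
Proof.
  intros Hz H1 H2. pose proof H1 as [L1 [HL1 [_ [_ E1]]]].
  pose proof H2 as [L2 [HL2 [_ [_ E2]]]].
  eapply equivA_trans; [apply equivA_sym, (gsum_idem_absorb Z1 L2); auto|].
  rewrite <- E2. eapply equivA_trans; [apply equivA_addC|].
  rewrite E1 at 1. apply gsum_idem_absorb; auto.
Qed.

Lemma prod_idem_exists : A zero -> finite_quotient A -> exists Z, prod_idem A Z.
Proof.
  intros Hz [s [Hs Hcov]].
  destruct (exists_transversal _ (equivA A) equivA_refl (idemQ A) zero s)
    as [L [Hsub [HLcov Hsep]]].
  exists (gsum L), L; split; [|split; [|split; [exact Hsep|reflexivity]]].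
  - intros E HE; apply Hsub, HE.
  - intros E HE. destruct (Hcov E (proj1 HE)) as [H [Hin e]].
    destruct (HLcov H Hin) as [E' [HE' e']]; [apply (idemQ_equivA E); auto|].
    exists E'; split; [exact HE'|eapply equivA_trans; eauto].
Qed.

Lemma in_kernel_intro Z0 G : A zero -> prod_idem A Z0 -> A G ->
  divQ A G Z0 -> divQ A Z0 G -> in_kernel A G.
Proof.
  intros Hz HZ0 HG dGZ dZG. split; [exact HG|]. intros Z HZ.
  pose proof (prod_idem_unique Z0 Z Hz HZ0 HZ) as e.
  split; eapply divQ_trans; eauto using divQ_equivA, equivA_sym.
Qed.

Lemma in_kernel_equivA G K : A zero -> A G -> equivA A G K -> in_kernel A K ->
  in_kernel A G.
Proof.
  intros Hz HG e [_ HK]. split; [exact HG|]. intros Z HZ.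
  destruct (HK Z HZ) as [dKZ dZK].
  split; eapply divQ_trans; eauto using divQ_equivA, equivA_sym.
Qed.

Lemma prod_idem_gadd_kernel Z Y : A zero -> finite_quotient A -> prod_idem A Z ->
  A Y -> in_kernel A (gadd Z Y).
Proof.
  intros Hz hf HZ HY. pose proof (prod_idem_closed Z Hz HZ) as AZ.
  apply (in_kernel_intro Z); auto using closed_gadd.
  - destruct (gpow_idem Y Hz hf HY) as [[|N] [HN Hidem]]; [lia|].
    exists (gpow Y N); split; [apply closed_gpow; auto|].
    eapply equivA_trans; [apply equivA_addA|].
    eapply equivA_trans; [apply equivA_addC|].
    apply prod_idem_absorb; auto.
  - exists Y; split; [exact HY|apply equivA_refl].
Qed.

Lemma in_kernel_gadd K Y : A zero -> finite_quotient A -> in_kernel A K -> A Y ->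
  in_kernel A (gadd K Y).
Proof.
  intros Hz hf HK HY. destruct (prod_idem_exists Hz hf) as [Z HZ].
  pose proof HK as [AK HKZ]. destruct (HKZ Z HZ) as [_ [W [HW eW]]].
  apply (in_kernel_equivA _ (gadd Z (gadd W Y))); eauto using closed_gadd.
  - eapply equivA_trans; [apply equivA_addr; [apply equivA_sym, eW|exact HY]|].
    apply equivA_addA.
  - apply prod_idem_gadd_kernel; auto using closed_gadd.
Qed.

Lemma kernel_meets_P K : A zero -> finite_quotient A -> in_kernel A K -> K <> zero ->
  exists G, in_kernel A G /\ misereP G = true.
Proof.
  intros Hz hf HK Knz. pose proof (proj1 HK) as AK.
  pose proof (in_kernel_gadd K K Hz hf HK AK) as HKK.
  destruct (misereP (gadd K K)) eqn:EKK; [eauto|].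
  destruct (misereP_option _ (gadd_neq_zero K K Knz) EKK) as [o [Ho Po]].
  apply in_options_gadd in Ho.
  destruct Ho as [[k [Hk ->]]|[k [Hk ->]]];
    pose proof (closed_option K k AK Hk) as Ak;
    assert (HKk : in_kernel A (gadd K k)) by (apply in_kernel_gadd; auto).
  - exists (gadd k K); split; [|exact Po].
    apply (in_kernel_equivA _ (gadd K k)); auto using closed_gadd, equivA_addC.
  - exists (gadd K k); auto.
Qed.

End Quotient.

Theorem mainTheorem20 (A : game -> Prop) :
  closed A ->
  (exists G, A G) ->
  ~ (forall G, A G <-> G = zero) ->
  finite_quotient A ->
  (exists Z, prod_idem A Z) /\
  (exists G, in_kernel A G /\ misereP G = true).
Proof.
  intros hc [G0 HG0] Hne hf.
  assert (Hz : A zero) by exact (closed_zero A hc G0 HG0).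
  destruct (prod_idem_exists A hc Hz hf) as [Z HZ].
  split; [eauto|].
  assert (exists G, A G /\ G <> zero) as [G [HG Gnz]].
  { apply NNPP; intro Hno; apply Hne; intros G; split; [|intros ->; exact Hz].
    intro HG; apply NNPP; intro Gnz; eauto. }
  apply (kernel_meets_P A hc (gadd Z G)); auto using gadd_neq_zero.
  apply prod_idem_gadd_kernel; auto.
Qed.
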